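(* Let $a,b\in\mathbb{C}$ with $a\neq0$. Let $U\subseteq\mathbb{C}$ be open and $\lambda:U\to\mathbb{C}$ holomorphic such that, with $y=e^{\lambda}$ and $y^{p}:=e^{p\lambda}$, $y(x)^a=1+axy(x)^b$ for all $x\in U$. (i) If $b\neq1$ and $a-b+1\neq0$, then the function $$F(x)=x\,y(x)-\frac1a\left[\frac{y(x)^{a-b+1}}{a-b+1}-\frac{y(x)^{1-b}}{1-b}\right]$$ satisfies $F'(x)=y(x)$ for all $x\in U$ (wherever $1-bxy^{b-a}\neq0$), i.e. $F$ is an antiderivative of $y$. (ii) If $b=1$, then $F(x)=x\,y(x)-\frac1a\left[\frac{y(x)^{a}}{a}-\lambda(x)\right]$ satisfies $F'(x)=y(x)$ there. (iii) If $b\neq1$, $a-b+1\neq0$, $U$ is a disc centred at $0$ and $\lambda(0)=0$ (so $y(0)=1$), then for all $x\in U$ (along paths in $U$ avoiding points where $1-bty^{b-a}=0$) $$\int_0^x y(t)\,dt=\frac1a\left[\frac{a-b}{a-b+1}\bigl(y(x)^{a-b+1}-1\bigr)+\frac{b}{1-b}\bigl(y(x)^{1-b}-1\bigr)\right].$$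
   Context: This concerns (branches of) solutions of $y^a=1+axy^b$ (the ultra-radical), with complex powers of $y$ computed consistently via the fixed holomorphic logarithm $\lambda=\log y$. In (iii), $y$ is the principal branch, which near $0$ is given by the master series $M(1;a;b;x)=1+x+\sum_{\ell\ge2}\frac{x^\ell}{\ell!}\prod_{\gamma=1}^{\ell-1}(1-a\gamma+b\ell)$. *)

From Stdlib Require Import Reals.
From Coquelicot Require Import Coquelicot.
Set Implicit Arguments.

Open Scope C_scope.

Definition cexp (z : C) : C :=
  ((exp (Re z) * cos (Im z))%R, (exp (Re z) * sin (Im z))%R).

Definition cpowL (lam : C) (p : C) : C := cexp (p * lam).

Definition Cis_derive (f : C -> C) (z l : C) : Prop :=
  @is_derive C_AbsRing C_NormedModule f z l.

Definition holomorphic_on (U : C -> Prop) (f : C -> C) : Prop :=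
  forall z, U z -> exists l, Cis_derive f z l.

Definition path_derive (g : R -> C) (t : R) (l : C) : Prop :=
  @is_derive R_AbsRing C_R_NormedModule g t l.

Definition C_is_RInt (f : R -> C) (a b : R) (v : C) : Prop :=
  @is_RInt C_R_NormedModule f a b v.

Definition disc0 (r : R) : C -> Prop := fun z => (Cmod z < r)%R.

(* With y = e^lam, the product and chain rules give
     F' = y + y^(1-b) lam' (x y^b - (y^a - 1) / a),
   using y^(a-b+1) = y^a y^(1-b) and y = y^b y^(1-b); the bracket vanishes by the
   defining equation y^a = 1 + a x y^b.  For b = 1 the term y^(1-b)/(1-b) is
   replaced by lam, with derivative lam'.  Part (iii) is the fundamental theorem
   of calculus along the path, F(x) - F(0), where y(0) = 1.  Complex
   differentiability of exp comes from |e^h - 1 - h| <= 8 |h|^2 for |h| <= 1/2,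
   obtained from second-order bounds on exp, cos and sin. *)

From Stdlib Require Import Reals Lra Psatz.
From Coquelicot Require Import Coquelicot.

Open Scope C_scope.

Lemma cexp_add z w : cexp (z + w) = cexp z * cexp w.
Proof.
  destruct z as [u v], w as [u' v']; unfold cexp, Cmult; simpl.
  rewrite exp_plus, cos_plus, sin_plus; f_equal; ring.
Qed.

Lemma cexp_0 : cexp 0 = 1.
Proof. unfold cexp, RtoC; simpl; rewrite exp_0, cos_0, sin_0; f_equal; ring. Qed.

Lemma cpowL_add l p q : cpowL l (p + q) = cpowL l p * cpowL l q.
Proof. unfold cpowL; rewrite <- cexp_add; f_equal; ring. Qed.

Lemma cpowL_1 l : cpowL l 1 = cexp l.
Proof. unfold cpowL; f_equal; ring. Qed.

Lemma cpowL_0_l p : cpowL 0 p = 1.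
Proof. unfold cpowL; rewrite Cmult_0_r; exact cexp_0. Qed.

Open Scope R_scope.

Lemma exp_sub_1_sub_le u : Rabs u <= /2 -> Rabs (exp u - 1 - u) <= 2 * u ^ 2.
Proof.
  intros Hu; apply Rabs_le_between in Hu.
  pose proof (exp_ineq1_le u); pose proof (exp_ineq1_le (- u)); pose proof (exp_pos u).
  assert (Einv : exp u * exp (- u) = 1) by (rewrite <- exp_plus, Rplus_opp_r; exact exp_0).
  assert (exp u <= 1 + u + 2 * u ^ 2) by (apply Rmult_le_reg_r with (1 - u); nra).
  apply Rabs_le; split; nra.
Qed.

Lemma cos_sub_1_le v : Rabs v <= /2 -> Rabs (cos v - 1) <= v ^ 2 / 2.
Proof.
  intros Hv; apply Rabs_le_between in Hv; pose proof PI2_1.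
  destruct (cos_bound v 0) as [Hlow _]; try lra.
  replace (cos_approx v (2 * 0 + 1)) with (1 - v ^ 2 / 2) in Hlow
    by (unfold cos_approx, cos_term; simpl; field).
  pose proof (COS_bound v); apply Rabs_le; split; nra.
Qed.

Lemma sin_sub_le_nonneg v : 0 <= v <= /2 -> Rabs (sin v - v) <= v ^ 2.
Proof.
  intros Hv; pose proof PI2_1.
  destruct (sin_bound v 0) as [Hlow Hup]; try lra.
  replace (sin_approx v (2 * 0 + 1)) with (v - v ^ 3 / 6) in Hlow
    by (unfold sin_approx, sin_term; simpl; field).
  replace (sin_approx v (2 * (0 + 1))) with (v - v ^ 3 / 6 + v ^ 5 / 120) in Hup
    by (unfold sin_approx, sin_term; simpl; field).
  assert (0 <= v ^ 3 <= v ^ 2) by (split; [apply pow_le; lra | nra]).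
  assert (v ^ 5 <= v ^ 3) by (replace (v ^ 5) with (v ^ 3 * v ^ 2) by ring; nra).
  apply Rabs_le; split; nra.
Qed.

Lemma sin_sub_le v : Rabs v <= /2 -> Rabs (sin v - v) <= v ^ 2.
Proof.
  intros Hv; apply Rabs_le_between in Hv.
  destruct (Rle_lt_dec 0 v) as [Hv0 | Hv0].
  - apply sin_sub_le_nonneg; lra.
  - replace (sin v - v) with (- (sin (- v) - (- v))) by (rewrite sin_neg; ring).
    rewrite Rabs_Ropp; replace (v ^ 2) with ((- v) ^ 2) by ring.
    apply sin_sub_le_nonneg; lra.
Qed.

Lemma Cmod_le_Rabs_add (x y : R) : Cmod (x, y) <= Rabs x + Rabs y.
Proof.
  replace (x, y) with (RtoC x + RtoC y * Ci)%C
    by (unfold RtoC, Ci, Cplus, Cmult; simpl; f_equal; ring).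
  eapply Rle_trans; [apply Cmod_triangle |].
  rewrite Cmod_mult, Cmod_Ci, !Cmod_R; lra.
Qed.

Lemma cexp_sub_1_sub_le h : Cmod h <= /2 -> Cmod (cexp h - 1 - h)%C <= 8 * Cmod h ^ 2.
Proof.
  destruct h as [u v]; intros Hr.
  pose proof (Rmax_Cmod (u, v)) as Hmax; simpl in Hmax.
  set (r := Cmod (u, v)) in *.
  assert (Hu : Rabs u <= r) by (eapply Rle_trans; [apply Rmax_l | exact Hmax]).
  assert (Hv : Rabs v <= r) by (eapply Rle_trans; [apply Rmax_r | exact Hmax]).
  replace (cexp (u, v) - 1 - (u, v))%C with (exp u * cos v - 1 - u, exp u * sin v - v)
    by (unfold cexp, Cminus, Cplus, Copp, RtoC; simpl; f_equal; ring).
  eapply Rle_trans; [apply Cmod_le_Rabs_add |].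
  pose proof (exp_sub_1_sub_le u ltac:(lra)) as HE.
  pose proof (cos_sub_1_le v ltac:(lra)) as Hc.
  pose proof (sin_sub_le v ltac:(lra)) as Hs.
  set (E := exp u - 1 - u) in *; set (c := cos v - 1) in *; set (s := sin v - v) in *.
  assert (u ^ 2 <= r ^ 2) by (rewrite <- (pow2_abs u); pose proof (Rabs_pos u); nra).
  assert (v ^ 2 <= r ^ 2) by (rewrite <- (pow2_abs v); pose proof (Rabs_pos v); nra).
  assert (0 <= r) by (pose proof (Rabs_pos u); lra).
  assert (Hexp : Rabs (1 + u + E) <= 2).
  { eapply Rle_trans; [apply Rabs_triang |].
    eapply Rle_trans; [apply Rplus_le_compat_r, Rabs_triang |].
    rewrite Rabs_R1; nra. }
  replace (exp u * cos v - 1 - u) with (E + c * (1 + u + E)) by (unfold E, c; ring).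
  replace (exp u * sin v - v) with (u * v + E * v + (1 + u + E) * s) by (unfold E, s; ring).
  pose proof (Rabs_pos u); pose proof (Rabs_pos v); pose proof (Rabs_pos c).
  pose proof (Rabs_pos E); pose proof (Rabs_pos s); pose proof (Rabs_pos (1 + u + E)).
  assert (Rabs (E + c * (1 + u + E)) <= 3 * r ^ 2).
  { eapply Rle_trans; [apply Rabs_triang |]; rewrite Rabs_mult; nra. }
  assert (Rabs (u * v + E * v + (1 + u + E) * s) <= 4 * r ^ 2).
  { eapply Rle_trans; [apply Rabs_triang |].
    eapply Rle_trans; [apply Rplus_le_compat_r, Rabs_triang |].
    rewrite !Rabs_mult; nra. }
  nra.
Qed.

Open Scope C_scope.

(* [C_NormedModule] and [C_R_NormedModule] carry the product (max-norm) uniform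
   structure on [R * R], whereas the generic [AbsRing] lemmas of Coquelicot use
   [Cmod]-balls; both give the same neighbourhoods. *)
Lemma locally_C_AbsRing_prod (z : C) (P : C -> Prop) :
  @locally (AbsRing_UniformSpace C_AbsRing) z P <-> @locally C_UniformSpace z P.
Proof.
  split; intros [d Hd].
  - assert (Hd2 : (0 < d / 2)%R) by (pose proof (cond_pos d); lra).
    exists (mkposreal _ Hd2); intros y [H1 H2]; apply Hd.
    change (Rabs (fst y - fst z) < d / 2)%R in H1.
    change (Rabs (snd y - snd z) < d / 2)%R in H2.
    change (Cmod (y - z) < d)%R.
    destruct y as [y1 y2], z as [z1 z2]; simpl in *.
    eapply Rle_lt_trans; [apply Cmod_le_Rabs_add |]; simpl; unfold Rminus in *; lra.
  - exists d; intros y Hy; apply Hd.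
    change (Cmod (y - z) < d)%R in Hy.
    pose proof (Rmax_Cmod (y - z)) as Hmax.
    destruct y as [y1 y2], z as [z1 z2]; simpl in Hmax.
    split; [change (Rabs (y1 - z1) < d)%R | change (Rabs (y2 - z2) < d)%R];
      eapply Rle_lt_trans; try exact Hy; eapply Rle_trans; try exact Hmax;
      [apply Rmax_l | apply Rmax_r].
Qed.

Lemma Cis_derive_AbsRing f z l :
  Cis_derive f z l <-> @is_derive C_AbsRing (AbsRing_NormedModule C_AbsRing) f z l.
Proof.
  split; intros [[Hadd Hscal [M [HM Hnorm]]] Hdom];
    (split; [constructor; [exact Hadd | exact Hscal | exists M; split; [exact HM | exact Hnorm]]
            | exact Hdom]).
Qed.

Lemma Cis_derive_cexp z : Cis_derive cexp z (cexp z).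
Proof.
  split; [apply is_linear_scal_l |].
  intros z' Hz'.
  apply (@is_filter_lim_locally_unique C_AbsRing (AbsRing_NormedModule C_AbsRing)) in Hz'.
  subst z'; intros eps.
  set (K := Cmod (cexp z)).
  assert (HK : (0 <= K)%R) by apply Cmod_ge_0.
  assert (Hd : (0 < Rmin (/ 2) (eps / (8 * (K + 1))))%R).
  { apply Rmin_pos; [lra | apply Rdiv_lt_0_compat; [apply cond_pos | lra]]. }
  exists (mkposreal _ Hd); intros y Hy.
  change (Cmod (y - z) < Rmin (/ 2) (eps / (8 * (K + 1))))%R in Hy.
  change (Cmod (cexp y - cexp z - (y - z) * cexp z) <= eps * Cmod (y - z))%R.
  change C in y.
  assert (Ey : cexp y = cexp z * cexp (y - z)) by (rewrite <- cexp_add; f_equal; ring).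
  rewrite Ey; set (h := y - z) in *.
  replace (cexp z * cexp h - cexp z - h * cexp z) with (cexp z * (cexp h - 1 - h)) by ring.
  rewrite Cmod_mult; fold K.
  pose proof (Rmin_l (/ 2) (eps / (8 * (K + 1)))); pose proof (Rmin_r (/ 2) (eps / (8 * (K + 1)))).
  pose proof (cexp_sub_1_sub_le h ltac:(lra)); pose proof (Cmod_ge_0 h).
  assert (Hh : (8 * (K + 1) * Cmod h <= eps)%R).
  { apply Rle_trans with (8 * (K + 1) * (eps / (8 * (K + 1))))%R;
      [apply Rmult_le_compat_l; lra | right; field; lra]. }
  apply Rle_trans with (K * (8 * Cmod h ^ 2))%R; [apply Rmult_le_compat_l; auto | nra].
Qed.

Lemma Cis_derive_eq f z l l' : Cis_derive f z l -> l = l' -> Cis_derive f z l'.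
Proof. now intros H <-. Qed.

Lemma Cis_derive_id z : Cis_derive (fun w => w) z 1.
Proof. apply Cis_derive_AbsRing, (@is_derive_id C_AbsRing). Qed.

Lemma Cis_derive_const c z : Cis_derive (fun _ => c) z 0.
Proof. apply (@is_derive_const C_AbsRing C_NormedModule). Qed.

Lemma Cis_derive_minus f g z df dg : Cis_derive f z df -> Cis_derive g z dg ->
  Cis_derive (fun w => f w - g w) z (df - dg).
Proof. apply (@is_derive_minus C_AbsRing C_NormedModule). Qed.

Lemma Cis_derive_mult f g z df dg : Cis_derive f z df -> Cis_derive g z dg ->
  Cis_derive (fun w => f w * g w) z (df * g z + f z * dg).
Proof.
  rewrite !Cis_derive_AbsRing; intros Hf Hg.
  apply (@is_derive_mult C_AbsRing); [exact Hf | exact Hg | exact Cmult_comm].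
Qed.

Lemma Cis_derive_scal c f z df : Cis_derive f z df -> Cis_derive (fun w => c * f w) z (c * df).
Proof.
  intros Hf; eapply Cis_derive_eq; [apply (Cis_derive_mult _ _ _ _ _ (Cis_derive_const c z) Hf) |].
  ring.
Qed.

Lemma Cis_derive_scal_l c f z df : Cis_derive f z df -> Cis_derive (fun w => f w * c) z (df * c).
Proof.
  intros Hf; eapply Cis_derive_eq; [apply (Cis_derive_mult _ _ _ _ _ Hf (Cis_derive_const c z)) |].
  ring.
Qed.

Lemma Cis_derive_comp f g z df dg : Cis_derive f (g z) df -> Cis_derive g z dg ->
  Cis_derive (fun w => f (g w)) z (dg * df).
Proof.
  intros Hf Hg; apply (@is_derive_comp C_AbsRing C_NormedModule); [exact Hf |].
  now apply Cis_derive_AbsRing.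
Qed.

Lemma Cis_derive_cexp_comp lam z L : Cis_derive lam z L ->
  Cis_derive (fun w => cexp (lam w)) z (L * cexp (lam z)).
Proof. apply Cis_derive_comp, Cis_derive_cexp. Qed.

Lemma Cis_derive_cpowL_comp lam z L p : Cis_derive lam z L ->
  Cis_derive (fun w => cpowL (lam w) p) z (p * L * cpowL (lam z) p).
Proof. intros HL; apply (Cis_derive_cexp_comp (fun w => p * lam w)), Cis_derive_scal, HL. Qed.

Lemma norm_C_R (h : C_R_NormedModule) : norm h = Cmod h.
Proof.
  change (sqrt (Rabs (fst h) ^ 2 + Rabs (snd h) ^ 2) = Cmod h).
  now rewrite !pow2_abs.
Qed.

Lemma Cis_derive_filterdiff_R F z l : Cis_derive F z l ->
  @filterdiff R_AbsRing C_R_NormedModule C_R_NormedModule F (locally z) (fun h => h * l).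
Proof.
  intros [_ Hdom]; specialize (Hdom z (fun P H => H)); split.
  - constructor.
    + intros x y; change ((x + y) * l = x * l + y * l); ring.
    + intros k x; change (scal k x * l = scal k (x * l)); rewrite !scal_R_Cmult; ring.
    + exists (Cmod l + 1)%R; split; [pose proof (Cmod_ge_0 l); lra |].
      intros x; rewrite !norm_C_R, Cmod_mult.
      pose proof (Cmod_ge_0 x); pose proof (Cmod_ge_0 l); nra.
  - intros z' Hz'; apply (@is_filter_lim_locally_unique R_AbsRing C_R_NormedModule) in Hz'.
    subst z'; intros eps.
    apply locally_C_AbsRing_prod; generalize (Hdom eps); apply filter_imp.
    intros y; now rewrite !norm_C_R.
Qed.

Lemma path_derive_comp F g t l d : Cis_derive F (g t) l -> path_derive g t d ->
  path_derive (fun s => F (g s)) t (d * l).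
Proof.
  intros HF Hg; eapply filterdiff_ext_lin.
  - exact (filterdiff_comp' g F t _ _ Hg (Cis_derive_filterdiff_R F (g t) l HF)).
  - intros s; simpl; rewrite !scal_R_Cmult; ring.
Qed.

Lemma continuous_Cmult (h k : R -> C) t : continuous h t -> continuous k t ->
  continuous (fun s => h s * k s) t.
Proof.
  intros Hh Hk.
  assert (Hlim : forall f : R -> C, continuous f t ->
    filterlim f (locally t) (@locally (AbsRing_UniformSpace C_AbsRing) (f t)))
    by (intros f Hf Q HQ; apply Hf, locally_C_AbsRing_prod, HQ).
  intros P HP; apply locally_C_AbsRing_prod in HP; revert P HP.
  change (filterlim (fun s => @mult C_AbsRing (h s) (k s)) (locally t)
    (@locally (AbsRing_UniformSpace C_AbsRing) (@mult C_AbsRing (h t) (k t)))).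
  eapply filterlim_comp_2; [apply Hlim, Hh | apply Hlim, Hk | apply filterlim_mult].
Qed.

Lemma C_is_RInt_path_antiderivative (F f : C -> C) (g dg : R -> C) :
  (forall t, (0 <= t <= 1)%R ->
     Cis_derive F (g t) (f (g t)) /\ (exists l, Cis_derive f (g t) l) /\
     path_derive g t (dg t) /\ continuous dg t) ->
  C_is_RInt (fun t => f (g t) * dg t) 0 1 (F (g 1%R) - F (g 0%R)).
Proof.
  intros Hpath.
  apply (@is_RInt_derive C_R_CompleteNormedModule (fun t => F (g t)));
    rewrite Rmin_left, Rmax_right by lra; intros t Ht;
    destruct (Hpath t Ht) as [HF [[l Hf] [Hg Hdg]]].
  - rewrite Cmult_comm; exact (path_derive_comp F g t _ _ HF Hg).
  - apply continuous_Cmult; [| exact Hdg].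
    apply (@ex_derive_continuous R_AbsRing C_R_NormedModule).
    exact (ex_intro _ _ (path_derive_comp f g t _ _ Hf Hg)).
Qed.

Section Ultraradical.

Variables (a b : C) (lam : C -> C).
Hypothesis a_neq0 : a <> 0.

Definition ultra_antideriv (z : C) : C :=
  z * cexp (lam z)
  - / a * (cpowL (lam z) (a - b + 1) / (a - b + 1) - cpowL (lam z) (1 - b) / (1 - b)).

Definition ultra_antideriv_log (z : C) : C :=
  z * cexp (lam z) - / a * (cpowL (lam z) a / a - lam z).

Lemma cpowL_split_1_sub_b l :
  cpowL l (a - b + 1) = cpowL l a * cpowL l (1 - b) /\ cexp l = cpowL l b * cpowL l (1 - b).
Proof.
  split; [| rewrite <- cpowL_1]; rewrite <- cpowL_add; f_equal; ring.
Qed.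

Lemma ultra_antideriv_derive x L :
  b <> 1 -> a - b + 1 <> 0 -> Cis_derive lam x L ->
  cpowL (lam x) a = 1 + a * x * cpowL (lam x) b ->
  Cis_derive ultra_antideriv x (cexp (lam x)).
Proof.
  intros Hb Hab HL Hx.
  pose proof (Cminus_eq_contra 1 b (not_eq_sym Hb)) as Hb'.
  eapply Cis_derive_eq.
  { apply Cis_derive_minus.
    - apply Cis_derive_mult; [apply Cis_derive_id | apply Cis_derive_cexp_comp, HL].
    - apply Cis_derive_scal, Cis_derive_minus; apply Cis_derive_scal_l, Cis_derive_cpowL_comp, HL. }
  destruct (cpowL_split_1_sub_b (lam x)) as [-> ->]; rewrite Hx.
  field; auto.
Qed.

Lemma ultra_antideriv_log_derive x L :
  Cis_derive lam x L -> cpowL (lam x) a = 1 + a * x * cexp (lam x) ->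
  Cis_derive ultra_antideriv_log x (cexp (lam x)).
Proof.
  intros HL Hx.
  eapply Cis_derive_eq.
  { apply Cis_derive_minus.
    - apply Cis_derive_mult; [apply Cis_derive_id | apply Cis_derive_cexp_comp, HL].
    - apply Cis_derive_scal, Cis_derive_minus;
        [apply Cis_derive_scal_l, Cis_derive_cpowL_comp |]; exact HL. }
  rewrite Hx; field; auto.
Qed.

Lemma ultra_antideriv_sub_0 x :
  b <> 1 -> a - b + 1 <> 0 -> lam 0 = 0 ->
  cpowL (lam x) a = 1 + a * x * cpowL (lam x) b ->
  ultra_antideriv x - ultra_antideriv 0
  = / a * ((a - b) / (a - b + 1) * (cpowL (lam x) (a - b + 1) - 1)
           + b / (1 - b) * (cpowL (lam x) (1 - b) - 1)).
Proof.
  intros Hb Hab Hl0 Hx.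
  pose proof (Cminus_eq_contra 1 b (not_eq_sym Hb)) as Hb'.
  unfold ultra_antideriv; rewrite Hl0, !cpowL_0_l, cexp_0.
  destruct (cpowL_split_1_sub_b (lam x)) as [-> ->]; rewrite Hx.
  field; auto.
Qed.

End Ultraradical.

Theorem mainTheorem10 (a b : C) (U : C -> Prop) (lam : C -> C) :
  a <> 0 ->
  open U ->
  holomorphic_on U lam ->
  (forall x, U x -> cpowL (lam x) a = 1 + a * x * cpowL (lam x) b) ->
  (* (i) *)
  (b <> 1 -> a - b + 1 <> 0 ->
   forall x, U x -> 1 - b * x * cpowL (lam x) (b - a) <> 0 ->
   Cis_derive
     (fun z => z * cexp (lam z)
        - / a * (cpowL (lam z) (a - b + 1) / (a - b + 1)
                 - cpowL (lam z) (1 - b) / (1 - b)))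
     x (cexp (lam x))) /\
  (* (ii) *)
  (b = 1 ->
   forall x, U x -> 1 - b * x * cpowL (lam x) (b - a) <> 0 ->
   Cis_derive
     (fun z => z * cexp (lam z) - / a * (cpowL (lam z) a / a - lam z))
     x (cexp (lam x))) /\
  (* (iii) *)
  (b <> 1 -> a - b + 1 <> 0 ->
   (exists r : R, (0 < r)%R /\ forall z, U z <-> disc0 r z) ->
   lam 0 = 0 ->
   forall (x : C) (g dg : R -> C),
     g 0%R = 0 -> g 1%R = x ->
     (forall t : R, (0 <= t <= 1)%R ->
        U (g t) /\ 1 - b * g t * cpowL (lam (g t)) (b - a) <> 0 /\
        path_derive g t (dg t) /\ continuous dg t) ->
     C_is_RInt (fun t => cexp (lam (g t)) * dg t) 0 1
       (/ a * ((a - b) / (a - b + 1) * (cpowL (lam x) (a - b + 1) - 1)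
               + b / (1 - b) * (cpowL (lam x) (1 - b) - 1)))).
Proof.
  (* The conditions [1 - b x y^(b-a) <> 0] are what makes [lam] holomorphic by the
     implicit function theorem. *)
  intros Ha _ Hhol Hrel.
  assert (Hanti : b <> 1 -> a - b + 1 <> 0 -> forall x, U x ->
            Cis_derive (ultra_antideriv a b lam) x (cexp (lam x))).
  { intros Hb Hab x Ux; destruct (Hhol x Ux) as [L HL].
    exact (ultra_antideriv_derive _ _ _ Ha _ _ Hb Hab HL (Hrel x Ux)). }
  split; [| split].
  - intros Hb Hab x Ux _; exact (Hanti Hb Hab x Ux).
  - intros -> x Ux _; destruct (Hhol x Ux) as [L HL].
    apply (ultra_antideriv_log_derive _ _ Ha _ _ HL); rewrite <- cpowL_1; exact (Hrel x Ux).
  - intros Hb Hab _ Hl0 x g dg Hg0 Hg1 Hpath.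
    destruct (Hpath 1%R ltac:(lra)) as [Ux _]; rewrite Hg1 in Ux.
    rewrite <- (ultra_antideriv_sub_0 _ _ _ Ha _ Hb Hab Hl0 (Hrel x Ux)), <- Hg0, <- Hg1.
    apply (C_is_RInt_path_antiderivative _ (fun z => cexp (lam z))); intros t Ht.
    destruct (Hpath t Ht) as [Ut [_ [Hg Hdg]]]; destruct (Hhol (g t) Ut) as [L HL].
    exact (conj (Hanti Hb Hab _ Ut)
             (conj (ex_intro _ _ (Cis_derive_cexp_comp _ _ _ HL)) (conj Hg Hdg))).
Qed.
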